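(* Let $A$ be a non-negative $d\times d$ matrix and $M=(I-A^T)(I-A)$. Let $X$ be an entrywise strictly positive $d\times d$ matrix with $\rho(X)=1$. Let $\mathbf u,\mathbf v$ be its left and right leading eigenvectors, normalized by $\|\mathbf u\|=\|\mathbf v\|=1$. Suppose there is $r>0$ with $A=X+r\,\mathbf u\,\mathbf v^T$ (i.e. $X$ is a positive stationary point of problem (P)). Then $M\mathbf v=r^2\mathbf v$; thus $\mathbf v$ is an eigenvector of $M$, and $$X=A-(A-I)\mathbf v\,\mathbf v^T .$$
   Context: $\rho(\cdot)$ denotes spectral radius and $\|\cdot\|$ the Euclidean norm. Left and right leading eigenvectors satisfy $\mathbf u^TX=\mathbf u^T$ and $X\mathbf v=\mathbf v$; they are positive since $X>0$. Problem (P) is: minimize the Frobenius distance $\|X-A\|$ over non-negative $X$ with $\rho(X)\le1$. *)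

From HB Require Import structures.
From mathcomp Require Import all_boot all_order all_algebra.
Set Implicit Arguments. Unset Strict Implicit. Unset Printing Implicit Defensive.
Import Order.TTheory GRing.Theory Num.Theory.
Local Open Scope ring_scope.

(* Matrices are taken over a numeric algebraically closed field C (e.g. algC),
   so that all (complex) eigenvalues are available; the matrices in the
   statement have real (indeed non-negative) entries. *)

Definition is_spectral_radius (C : numClosedFieldType) (n : nat)
  (X : 'M[C]_n) (rho : C) : Prop :=
  (exists2 l : C, eigenvalue X l & `|l| = rho) /\
  (forall l : C, eigenvalue X l -> `|l| <= rho).

Definition sqnorm (C : numClosedFieldType) (n : nat) (w : 'cV[C]_n) : C :=
  \sum_(i < n) `|w i 0| ^+ 2.

From HB Require Import structures.
From mathcomp Require Import all_boot all_order all_algebra.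
Import Order.TTheory GRing.Theory Num.Theory.
Local Open Scope ring_scope.

(* The identity is purely algebraic: with v^T v = u^T u = 1, the relation
   A = X + r u v^T gives A v = v + r u and A^T u = u + r v, so (I - A) v = - r u
   and (I - A^T) u = - r v.  Positivity of u and v is only needed to turn the
   normalisation sum |v_i|^2 = 1 into v^T v = 1. *)

Lemma trmx_mulmx_nonneg (C : numClosedFieldType) (n : nat) (w : 'cV[C]_n) :
  (forall i, 0 <= w i 0) -> w^T *m w = (sqnorm w)%:M.
Proof.
move=> w_ge0; apply/matrixP => i j; rewrite !ord1 !mxE /sqnorm.
by apply: eq_bigr => k _; rewrite !mxE ger0_norm.
Qed.

Section RankOnePerturbation.

Variables (R : comNzRingType) (n : nat).
Variables (A X : 'M[R]_n) (u v : 'cV[R]_n) (r : R).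
Hypotheses (Xu : u^T *m X = u^T) (Xv : X *m v = v).
Hypotheses (uu : u^T *m u = 1%:M) (vv : v^T *m v = 1%:M).
Hypothesis AX : A = X + r *: (u *m v^T).

Lemma perturbed_mul_right : A *m v = v + r *: u.
Proof. by rewrite AX mulmxDl Xv -scalemxAl -mulmxA vv mulmx1. Qed.

Lemma perturbed_trmx_mul_left : A^T *m u = u + r *: v.
Proof.
have XTu : X^T *m u = u by rewrite -[u]trmxK -trmx_mul Xu.
rewrite AX linearD /= linearZ /= trmx_mul trmxK mulmxDl XTu.
by rewrite -scalemxAl -mulmxA uu mulmx1.
Qed.

Lemma perturbed_sub_mul_right : (1%:M - A) *m v = - (r *: u).
Proof. by rewrite mulmxBl mul1mx perturbed_mul_right opprD addNKr. Qed.

Lemma perturbed_normal_eigen :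
  (1%:M - A^T) *m (1%:M - A) *m v = r ^+ 2 *: v.
Proof.
rewrite -mulmxA perturbed_sub_mul_right mulmxN -scalemxAr.
rewrite mulmxBl mul1mx perturbed_trmx_mul_left opprD addNKr.
by rewrite scalerN opprK scalerA expr2.
Qed.

Lemma perturbed_recover : X = A - (A - 1%:M) *m v *m v^T.
Proof.
have A1v : (A - 1%:M) *m v = r *: u.
  by rewrite -opprB mulNmx perturbed_sub_mul_right opprK.
by rewrite A1v -scalemxAl AX addrK.
Qed.

End RankOnePerturbation.

Theorem corollary2 (C : numClosedFieldType) (d : nat)
  (A X : 'M[C]_d) (u v : 'cV[C]_d) (r : C)
  (hA : forall i j, 0 <= A i j)
  (hX : forall i j, 0 < X i j)
  (hrho : is_spectral_radius X 1)
  (hu : u^T *m X = u^T) (hv : X *m v = v)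
  (hupos : forall i, 0 < u i 0) (hvpos : forall i, 0 < v i 0)
  (hun : sqnorm u = 1) (hvn : sqnorm v = 1)
  (hr : 0 < r)
  (hAX : A = X + r *: (u *m v^T)) :
  let M := (1%:M - A^T) *m (1%:M - A) in
  M *m v = r ^+ 2 *: v /\ X = A - (A - 1%:M) *m v *m v^T.
Proof.
have uu : u^T *m u = 1%:M by rewrite trmx_mulmx_nonneg ?hun // => i; apply: ltW.
have vv : v^T *m v = 1%:M by rewrite trmx_mulmx_nonneg ?hvn // => i; apply: ltW.
split; first exact: perturbed_normal_eigen hu hv uu vv hAX.
exact: perturbed_recover hv vv hAX.
Qed.
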